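(* Let $\mathbf{Y}\in\mathbb{R}^{N\times B}$, $\mathbf{R}\in\mathbb{R}^{M\times B}$, and $\mathbf{A}\in\mathbb{R}^{N\times M}$ with $\mathbf{A}^{T}\mathbf{A}$ nonsingular; let $\mathbf{A}=\mathbf{U}\boldsymbol{\Lambda}\mathbf{V}^{T}$ be a compact singular value decomposition ($\mathbf{U}\in\mathbb{R}^{N\times M}$ with orthonormal columns, $\boldsymbol{\Lambda},\mathbf{V}\in\mathbb{R}^{M\times M}$). Let $\mathbf{S}_{1},\dots,\mathbf{S}_{M}$ be $B\times B$ symmetric positive definite matrices, $\mathbf{Q}=\mathrm{blockdiag}(\mathbf{S}_{1},\dots,\mathbf{S}_{M})+\mathbf{A}^{T}\mathbf{A}\otimes\mathbf{I}_{B}$ and $\mathbf{z}=\mathrm{vec}\big((\mathbf{Y}-\mathbf{A}\mathbf{R})^{T}\mathbf{A}\big)$, and assume $\mathbf{z}\neq\mathbf{0}$. Then $$0<\mathbf{z}^{T}\mathbf{Q}^{-1}\mathbf{z}<\Vert\mathbf{U}^{T}(\mathbf{Y}-\mathbf{A}\mathbf{R})\Vert_{F}^{2}.$$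
   Context: $\mathrm{vec}(\mathbf{X})$ stacks the columns of $\mathbf{X}$; $\otimes$ is the Kronecker product; $\mathrm{blockdiag}(\cdot)$ is the block diagonal matrix with the listed diagonal blocks; $\Vert\cdot\Vert_F$ is the Frobenius norm. *)

From HB Require Import structures.
From mathcomp Require Import all_boot all_order all_algebra.
Set Implicit Arguments. Unset Strict Implicit. Unset Printing Implicit Defensive.
Import Order.TTheory GRing.Theory Num.Theory.
Local Open Scope ring_scope.

(* Index convention: 'I_(m * n) is identified with 'I_m * 'I_n through
   mathcomp's [mxvec_index i j] (row-major, i.e. value i * n + j). *)

(* vec X stacks the columns of X : 'M_(m, n) into a column vector of size n*m;
   entry (mxvec_index j i) is X i j, i.e. column j occupies the j-th block. *)
Definition vec (R : nmodType) (m n : nat) (X : 'M[R]_(m, n)) : 'cV[R]_(n * m) :=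
  (mxvec X^T)^T.

Definition kron (R : pzRingType) (m1 n1 m2 n2 : nat)
  (A : 'M[R]_(m1, n1)) (B : 'M[R]_(m2, n2)) : 'M[R]_(m1 * m2, n1 * n2) :=
  \sum_(i1 < m1) \sum_(j1 < n1) \sum_(i2 < m2) \sum_(j2 < n2)
     (A i1 j1 * B i2 j2) *: delta_mx (mxvec_index i1 i2) (mxvec_index j1 j2).

Definition blockdiag (R : pzRingType) (M B : nat) (S : 'I_M -> 'M[R]_B)
  : 'M[R]_(M * B) :=
  \sum_(i < M) kron (delta_mx i i) (S i).

Definition sym_pos_def (R : numDomainType) (n : nat) (S : 'M[R]_n) : Prop :=
  S^T = S /\ forall x : 'cV[R]_n, x != 0 -> 0 < (x^T *m S *m x) 0 0.

Definition frob2 (R : pzRingType) (m n : nat) (X : 'M[R]_(m, n)) : R :=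
  \sum_(i < m) \sum_(j < n) X i j ^+ 2.

From HB Require Import structures.
From mathcomp Require Import all_boot all_order all_algebra.
From mathcomp Require Import ring lra.
Import Order.TTheory GRing.Theory Num.Theory.
Local Open Scope ring_scope.

Set Implicit Arguments. Unset Strict Implicit. Unset Printing Implicit Defensive.

(* Write W = Y - A R and K = A^T A, and let P = K (x) I, which is symmetric
   positive semidefinite, and D = blockdiag(S_i), which is positive definite,
   so that Q = D + P.  The vector z is P y with y = vec((K^-1 A^T W)^T), and
   y^T z = tr(W^T A K^-1 A^T W) = ||U^T W||_F^2 because A K^-1 A^T = U U^T is
   the orthogonal projector onto the range of A.  With w = Q^-1 z one has
   z^T Q^-1 z = w^T Q w > 0, and expanding 0 <= (w - y)^T P (w - y) gives
   y^T z >= w^T z + w^T D w > w^T z = z^T Q^-1 z.  Of the singular value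
   decomposition only A = U G with U^T U = I is used. *)

Section Vectorization.
Variable R : comNzRingType.

(* Row-major vectorization; the column stacking [vec] of the paper is
   [vecr] of the transpose. *)
Definition vecr m n (X : 'M[R]_(m, n)) : 'cV[R]_(m * n) := (mxvec X)^T.

Lemma vec_vecr m n (X : 'M[R]_(m, n)) : vec X = vecr X^T.
Proof. by []. Qed.

Lemma vec_mx_trK m n (x : 'cV[R]_(m * n)) : vecr (vec_mx x^T) = x.
Proof. by rewrite /vecr vec_mxK trmxK. Qed.

Lemma vecrE m n (X : 'M[R]_(m, n)) i j (c : 'I_1) :
  vecr X (mxvec_index i j) c = X i j.
Proof. by rewrite /vecr mxE [c]ord1 mxvecE. Qed.

Lemma mxvec_index_inj m n : injective (uncurry (@mxvec_index m n)).
Proof.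
have [g ug _] := @curry_mxvec_bij m n.
by apply: (can_inj (g := g)) => x; apply: ug.
Qed.

Lemma eq_mxvec_index m n (i i' : 'I_m) (j j' : 'I_n) :
  (mxvec_index i j == mxvec_index i' j') = (i == i') && (j == j').
Proof.
apply/eqP/andP => [/(@mxvec_index_inj m n (i, j) (i', j')) [-> ->]|] //.
by case=> /eqP-> /eqP->.
Qed.

Lemma big_mxvec_index m n (F : 'I_(m * n) -> R) :
  \sum_(k < m * n) F k = \sum_(i < m) \sum_(j < n) F (mxvec_index i j).
Proof.
rewrite pair_big /= (reindex (uncurry (@mxvec_index m n))) /=.
  by apply: eq_bigr => -[i j].
have [g ug gu] := @curry_mxvec_bij m n.
by exists g => x _; [apply: ug | apply: gu].
Qed.

Lemma kronE m1 n1 m2 n2 (K : 'M[R]_(m1, n1)) (L : 'M[R]_(m2, n2)) i1 i2 j1 j2 :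
  kron K L (mxvec_index i1 i2) (mxvec_index j1 j2) = K i1 j1 * L i2 j2.
Proof.
rewrite /kron summxE (bigD1 i1) //= [X in _ + X]big1 => [|a]; last first.
  rewrite eq_sym => /negPf na; rewrite summxE big1 // => b _.
  rewrite summxE big1 // => c _; rewrite summxE big1 // => d _.
  by rewrite !mxE !eq_mxvec_index na mulr0.
rewrite addr0 summxE (bigD1 j1) //= [X in _ + X]big1 => [|b]; last first.
  rewrite eq_sym => /negPf nb; rewrite summxE big1 // => c _.
  by rewrite summxE big1 // => d _; rewrite !mxE !eq_mxvec_index nb andbF mulr0.
rewrite addr0 summxE (bigD1 i2) //= [X in _ + X]big1 => [|c]; last first.
  rewrite eq_sym => /negPf nc; rewrite summxE big1 // => d _.
  by rewrite !mxE !eq_mxvec_index nc andbF mulr0.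
rewrite addr0 summxE (bigD1 j2) //= [X in _ + X]big1 => [|d]; last first.
  by rewrite eq_sym => /negPf nd; rewrite !mxE !eq_mxvec_index nd !andbF mulr0.
by rewrite addr0 !mxE !eqxx mulr1.
Qed.

Lemma mulmx_kron_vecr m1 n1 m2 n2 (K : 'M[R]_(m1, n1)) (L : 'M[R]_(m2, n2))
    (X : 'M[R]_(n1, n2)) :
  kron K L *m vecr X = vecr (K *m X *m L^T).
Proof.
apply/matrixP => k c; case/mxvec_indexP: k => i j.
rewrite vecrE !mxE big_mxvec_index.
under eq_bigr do under eq_bigr do rewrite kronE vecrE.
rewrite exchange_big /=; apply: eq_bigr => b _; rewrite !mxE mulr_suml.
by apply: eq_bigr => a _; ring.
Qed.

Lemma trmx_kron m1 n1 m2 n2 (K : 'M[R]_(m1, n1)) (L : 'M[R]_(m2, n2)) :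
  (kron K L)^T = kron K^T L^T.
Proof.
apply/matrixP => k l; case/mxvec_indexP: k => i j; case/mxvec_indexP: l => a b.
by rewrite mxE !kronE !mxE.
Qed.

Lemma vecr_dot m n (X Y : 'M[R]_(m, n)) :
  ((vecr X)^T *m vecr Y) 0 0 = \tr (X *m Y^T).
Proof.
rewrite !mxE big_mxvec_index; apply: eq_bigr => i _; rewrite mxE.
by apply: eq_bigr => j _; rewrite [(vecr X)^T _ _]mxE !vecrE mxE.
Qed.

Lemma mxtrace_mul_delta m (X : 'M[R]_m) j : \tr (X *m delta_mx j j) = X j j.
Proof.
rewrite /mxtrace (bigD1 j) //= big1 => [|i /negPf nij]; last first.
  by rewrite mxE big1 // => k _; rewrite !mxE nij andbF mulr0.
rewrite addr0 mxE (bigD1 j) //= big1 => [|k /negPf nkj]; last first.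
  by rewrite !mxE nkj mulr0.
by rewrite !mxE eqxx mulr1 addr0.
Qed.

Lemma frob2_mxtrace m n (C : 'M[R]_(m, n)) : frob2 C = \tr (C *m C^T).
Proof.
apply: eq_bigr => i _; rewrite mxE.
by apply: eq_bigr => j _; rewrite mxE expr2.
Qed.

Lemma mulmx_blockdiag_vecr M B (S : 'I_M -> 'M[R]_B) (X : 'M[R]_(M, B)) :
  blockdiag S *m vecr X = vecr (\sum_j delta_mx j j *m X *m (S j)^T).
Proof.
rewrite /blockdiag mulmx_suml; under eq_bigr do rewrite mulmx_kron_vecr.
by rewrite /vecr !linear_sum.
Qed.

End Vectorization.

Section QuadraticForms.
Variable R : realFieldType.

Definition qform n (Q : 'M[R]_n) (x : 'cV[R]_n) : R := (x^T *m Q *m x) 0 0.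

Definition posdef n (Q : 'M[R]_n) : Prop := forall x, x != 0 -> 0 < qform Q x.

Definition posemidef n (Q : 'M[R]_n) : Prop := forall x, 0 <= qform Q x.

Lemma qform_tr n (Q : 'M[R]_n) x : qform Q^T x = qform Q x.
Proof.
rewrite /qform; have -> : x^T *m Q^T *m x = (x^T *m Q *m x)^T by rewrite !trmx_mul trmxK mulmxA.
by rewrite mxE.
Qed.

Lemma qformD n (D P : 'M[R]_n) x : qform (D + P) x = qform D x + qform P x.
Proof. by rewrite /qform mulmxDr mulmxDl mxE. Qed.

Lemma qformB n (P : 'M[R]_n) x y : P^T = P ->
  qform P (x - y) = qform P x - (x^T *m P *m y) 0 0 *+ 2 + qform P y.
Proof.
move=> PT; rewrite /qform [(x - y)^T]linearB /= mulmxBr !mulmxBl.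
have -> : y^T *m P *m x = (x^T *m P *m y)^T.
  by rewrite !trmx_mul trmxK PT mulmxA.
by rewrite !mxE; ring.
Qed.

Lemma frob2_ge0 m n (C : 'M[R]_(m, n)) : 0 <= frob2 C.
Proof. by apply: sumr_ge0 => i _; apply: sumr_ge0 => j _; apply: sqr_ge0. Qed.

Lemma qform_ge0_sym_pos_def n (S : 'M[R]_n) x : sym_pos_def S -> 0 <= qform S x.
Proof.
case=> _ Spos; have [->|/Spos/ltW //] := eqVneq x 0.
by rewrite /qform mulmx0 mxE.
Qed.

Lemma qform_blockdiag M B (S : 'I_M -> 'M[R]_B) (X : 'M[R]_(M, B)) :
  qform (blockdiag S) (vecr X) = \sum_j qform (S j) (row j X)^T.
Proof.
rewrite /qform -mulmxA mulmx_blockdiag_vecr vecr_dot !linear_sum /=.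
apply: eq_bigr => j _.
rewrite !trmx_mul !trmxK trmx_delta !mulmxA mxtrace_mul_delta !mxE.
apply: eq_bigr => k _; rewrite !mxE; congr (_ * _).
by apply: eq_bigr => l _; rewrite !mxE.
Qed.

Lemma blockdiag_posdef M B (S : 'I_M -> 'M[R]_B) :
  (forall i, sym_pos_def (S i)) -> posdef (blockdiag S).
Proof.
move=> Spd x xn0; rewrite -(vec_mx_trK x) qform_blockdiag; set X := vec_mx x^T.
have [j rowj_n0] : exists j, row j X != 0.
  apply/existsP; apply: contraNT xn0 => /existsPn rows0.
  have X0 : X = 0.
    apply/matrixP => i k.
    by move/negPn/eqP/matrixP/(_ 0 k): (rows0 i); rewrite !mxE.
  by rewrite -(vec_mx_trK x) -/X X0 /vecr linear0 /= trmx0.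
rewrite (bigD1 j) //=; apply: ltr_pwDl; last first.
  by apply: sumr_ge0 => i _; apply: qform_ge0_sym_pos_def.
by apply: (Spd j).2; rewrite trmx_eq0.
Qed.

Lemma qform_kron_mulTmx N M B (A : 'M[R]_(N, M)) (X : 'M[R]_(M, B)) :
  qform (kron (A^T *m A) 1%:M) (vecr X) = frob2 (A *m X).
Proof.
rewrite /qform -mulmxA mulmx_kron_vecr trmx1 mulmx1 vecr_dot frob2_mxtrace.
by rewrite !trmx_mul trmxK !mulmxA mxtrace_mulC !mulmxA.
Qed.

Lemma kron_mulTmx_posemidef N M B (A : 'M[R]_(N, M)) :
  posemidef (kron (A^T *m A) (1%:M : 'M[R]_B)).
Proof. by move=> x; rewrite -(vec_mx_trK x) qform_kron_mulTmx frob2_ge0. Qed.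

Lemma posdef_unitmx n (Q : 'M[R]_n) : posdef Q -> Q \in unitmx.
Proof.
move=> Qpd; rewrite unitmxE unitfE; apply/det0P => -[v vn0 vQ].
have := Qpd v^T; rewrite trmx_eq0 /qform trmxK vQ mul0mx mxE => /(_ vn0).
by rewrite ltxx.
Qed.

Lemma posdef_addr n (D P : 'M[R]_n) :
  posdef D -> posemidef P -> posdef (D + P).
Proof. by move=> Dpd Ppsd x xn0; rewrite qformD ltr_wpDr // Dpd. Qed.

Lemma qform_invmx n (Q : 'M[R]_n) w :
  Q \in unitmx -> qform (invmx Q) (Q *m w) = qform Q w.
Proof.
move=> Qu; rewrite -[RHS]qform_tr /qform -mulmxA mulKmx //.
by rewrite trmx_mul.
Qed.

Lemma qform_invmx_bounds n (D P : 'M[R]_n) (y : 'cV[R]_n) :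
    posdef D -> P^T = P -> posemidef P -> P *m y != 0 ->
  0 < qform (invmx (D + P)) (P *m y) < qform P y.
Proof.
move=> Dpd PT Ppsd zn0; have Qpd := posdef_addr Dpd Ppsd.
have Qu := posdef_unitmx Qpd; set w := invmx (D + P) *m (P *m y).
have Qw : (D + P) *m w = P *m y by rewrite mulKVmx.
have wn0 : w != 0 by apply: contraNneq zn0 => w0; rewrite -Qw w0 mulmx0.
have cross : (w^T *m P *m y) 0 0 = qform D w + qform P w.
  by rewrite -qformD /qform -mulmxA -Qw mulmxA.
rewrite -Qw qform_invmx // qformD.
have := Ppsd (w - y); rewrite qformB // cross.
have := Dpd w wn0; have := Ppsd w; rewrite mulr2n => Pw Dw Pwy.
by apply/andP; split; lra.
Qed.

End QuadraticForms.

Lemma mulmx_invmx_mulTmx (R : comUnitRingType) n m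
    (A U : 'M[R]_(n, m)) (G : 'M[R]_m) :
  U^T *m U = 1%:M -> A^T *m A \in unitmx -> A = U *m G ->
  A *m invmx (A^T *m A) *m A^T = U *m U^T.
Proof.
move=> UU Ku A_UG; subst A; have K_GG : (U *m G)^T *m (U *m G) = G^T *m G.
  by rewrite trmx_mul mulmxA -(mulmxA G^T) UU mulmx1.
rewrite K_GG; move: Ku; rewrite K_GG unitmx_mul => /andP[GTu Gu].
have invK : invmx (G^T *m G) = invmx G *m invmx G^T.
  have GG_inv : G^T *m G *m (invmx G *m invmx G^T) = 1%:M.
    by rewrite -mulmxA (mulmxA G) mulmxV // mul1mx mulmxV.
  by rewrite -[LHS]mulmx1 -GG_inv mulmxA mulVmx ?unitmx_mul ?GTu // mul1mx.
rewrite invK trmx_mul !mulmxA -(mulmxA U G) mulmxV // mulmx1.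
by rewrite -(mulmxA U) mulVmx // mulmx1.
Qed.

Theorem mainTheorem6 (R : realFieldType) (N M B : nat)
  (Y : 'M[R]_(N, B)) (Rm : 'M[R]_(M, B)) (A : 'M[R]_(N, M))
  (U : 'M[R]_(N, M)) (Lam V : 'M[R]_M) (S : 'I_M -> 'M[R]_B) :
  A^T *m A \in unitmx ->
  (* compact SVD A = U Lam V^T *)
  U^T *m U = 1%:M ->
  V^T *m V = 1%:M ->
  is_diag_mx Lam ->
  (forall i : 'I_M, 0 <= Lam i i) ->
  A = U *m Lam *m V^T ->
  (forall i : 'I_M, sym_pos_def (S i)) ->
  let Q : 'M[R]_(M * B) := blockdiag S + kron (A^T *m A) (1%:M : 'M[R]_B) in
  let z : 'cV[R]_(M * B) := vec ((Y - A *m Rm)^T *m A) in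
  z != 0 ->
  0 < (z^T *m invmx Q *m z) 0 0 /\
  (z^T *m invmx Q *m z) 0 0 < frob2 (U^T *m (Y - A *m Rm)).
Proof.
move=> Ku UU _ _ _ A_svd Spd Q z zn0.
set W := Y - A *m Rm; set K := A^T *m A; set P := kron K (1%:M : 'M[R]_B).
have zE : z = vecr (A^T *m W) by rewrite /z vec_vecr trmx_mul trmxK.
set y := vecr (invmx K *m (A^T *m W)).
have Py : P *m y = z.
  by rewrite mulmx_kron_vecr trmx1 mulmx1 mulmxA mulmxV // mul1mx zE.
have PT : P^T = P by rewrite trmx_kron trmx1 trmx_mul trmxK.
have Pyy : qform P y = frob2 (U^T *m W).
  have A_UG : A = U *m (Lam *m V^T) by rewrite mulmxA.
  have proj := mulmx_invmx_mulTmx UU Ku A_UG.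
  rewrite /qform -mulmxA Py zE vecr_dot frob2_mxtrace.
  rewrite !trmx_mul !trmxK !mulmxA mxtrace_mulC !mulmxA proj.
  by rewrite [RHS]mxtrace_mulC !mulmxA.
have Pyn0 : P *m y != 0 by rewrite Py.
have := qform_invmx_bounds (blockdiag_posdef Spd) PT (kron_mulTmx_posemidef A) Pyn0.
by rewrite Py Pyy => /andP[].
Qed.
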